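(* Let $R=k[x_1,\dots,x_n]$ be a polynomial ring over a field $k$, let $I$ be a monomial ideal of $R$, and let $t\ge 1$. Then $I^{(t)}$ is integrally closed if and only if $I_F^t$ is integrally closed for all $F\in\mathcal F(I)$.
   Context: For $F\subseteq[n]$, $P_F$ is the ideal generated by the variables $x_i$ with $i\notin F$. $\mathcal F(I)$ is the set of all $F\subseteq[n]$ such that $P_F$ is a minimal prime of $I$ (every minimal prime of a monomial ideal has this form), and for $F\in\mathcal F(I)$, $I_F$ denotes the (monomial) primary component of $I$ associated with $P_F$. The $t$-th symbolic power $I^{(t)}$ is the intersection of the primary components of $I^t$ associated with the minimal primes of $I$. *)

From HB Require Import structures.
From mathcomp Require Import all_boot all_order all_algebra.
From mathcomp Require Import mpoly.

Set Implicit Arguments.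
Unset Strict Implicit.
Unset Printing Implicit Defensive.

Import GRing.Theory.
Local Open Scope ring_scope.

Section MonomialIdeals.
Variables (k : fieldType) (n : nat).
Local Notation R := {mpoly k[n]}.

Definition pset := R -> Prop.

Definition psubset (I J : pset) : Prop := forall f, I f -> J f.

Definition ideal_gen (S : pset) : pset :=
  fun f => exists (m : nat) (c a : 'I_m -> R),
      (forall i, S (a i)) /\ f = \sum_(i < m) c i * a i.

Definition is_ideal (I : pset) : Prop :=
  [/\ I 0, (forall f g, I f -> I g -> I (f + g)) &
      (forall r f, I f -> I (r * f))].

Definition prime_ideal (P : pset) : Prop :=
  [/\ is_ideal P, ~ P 1 & (forall a b, P (a * b) -> P a \/ P b)].

Definition monomial_ideal (I : pset) : Prop :=
  exists M : 'X_{1..n} -> Prop,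
    forall f, I f <-> ideal_gen (fun g => exists m, M m /\ g = 'X_[m]) f.

Definition ideal_pow (I : pset) (t : nat) : pset :=
  ideal_gen (fun f => exists a : 'I_t -> R,
                 (forall i, I (a i)) /\ f = \prod_(i < t) a i).

Definition PF (F : {set 'I_n}) : pset :=
  ideal_gen (fun f => exists i : 'I_n, i \notin F /\ f = 'X_i).

Definition minimal_prime (I P : pset) : Prop :=
  [/\ prime_ideal P, psubset I P &
      (forall Q, prime_ideal Q -> psubset I Q -> psubset Q P -> psubset P Q)].

Definition inFI (I : pset) (F : {set 'I_n}) : Prop := minimal_prime I (PF F).

(* Primary component of I associated with the (minimal) prime P_F:
   I R_{P_F} \cap R. *)
Definition component (I : pset) (F : {set 'I_n}) : pset :=
  fun f => exists g, ~ PF F g /\ I (g * f).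

Definition symbolic_pow (I : pset) (t : nat) : pset :=
  fun f => forall F, inFI I F -> component (ideal_pow I t) F f.

Definition integral_over_ideal (J : pset) (r : R) : Prop :=
  exists (m : nat) (a : nat -> R),
    [/\ (0 < m)%N, (forall i, (1 <= i <= m)%N -> ideal_pow J i (a i)) &
        r ^+ m + \sum_(1 <= i < m.+1) a i * r ^+ (m - i) = 0].

Definition integrally_closed (J : pset) : Prop :=
  forall r, integral_over_ideal J r -> J r.

End MonomialIdeals.

From HB Require Import structures.
From mathcomp Require Import all_boot all_order all_algebra.
From mathcomp Require Import mpoly.
From Stdlib Require Import ClassicalEpsilon.

Set Implicit Arguments.
Unset Strict Implicit.
Unset Printing Implicit Defensive.
Import GRing.Theory.
Local Open Scope ring_scope.

(* Localizing at P_F inverts the variables x_i with i in F, so for a monomial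
   ideal I the component I_F is generated by the generators of I with these
   variables set to 1, and (I^t)_F = (I_F)^t. The inclusion of (I^t)_F in
   (I_F)^t is a saturation property of monomial ideals stable under setting
   the F-variables to 1: if g is outside P_F and every monomial of g f lies in
   such an ideal, so does every monomial of f. To see it, grade by the degree
   in the variables outside F: g has a nonzero component of degree 0, which
   multiplies the lowest nonzero component of the offending part of f without
   cancellation.
   Hence I^(t) is the intersection of the ideals (I_F)^t. An intersection of
   integrally closed ideals is integrally closed; conversely, an equation of
   integral dependence of r over (I_F)^t = (I^t)_F becomes, after multiplying
   by a suitable g outside P_F, an equation of g r over I^t, hence over I^(t),
   and g r in I^(t) gives r in (I^t)_F. *)

Section Ideals.
Variables (k : fieldType) (n : nat).
Local Notation R := {mpoly k[n]}.
Implicit Types (S J K P : pset k n) (f g h r : R).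

Lemma ideal0 J : is_ideal J -> J 0.
Proof. by case. Qed.

Lemma idealD J f g : is_ideal J -> J f -> J g -> J (f + g).
Proof. by case=> _ + _; apply. Qed.

Lemma idealMl J r f : is_ideal J -> J f -> J (r * f).
Proof. by case=> _ _; apply. Qed.

Lemma idealMr J r f : is_ideal J -> J f -> J (f * r).
Proof. by rewrite mulrC; apply: idealMl. Qed.

Lemma idealB J f g : is_ideal J -> J f -> J g -> J (f - g).
Proof. by move=> JI Jf Jg; apply: idealD => //; rewrite -mulN1r; apply: idealMl. Qed.

Lemma ideal_sum J (T : Type) (s : seq T) (F : T -> R) :
  is_ideal J -> (forall i, J (F i)) -> J (\sum_(i <- s) F i).
Proof.
move=> JI JF; apply: big_ind => [|x y|i _]; [exact: ideal0 | exact: idealD | exact: JF].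
Qed.

Lemma prime_idealN1 P : prime_ideal P -> ~ P 1.
Proof. by case. Qed.

Lemma prime_idealNM P f g : prime_ideal P -> ~ P f -> ~ P g -> ~ P (f * g).
Proof. by case=> _ _ PM Pf Pg /PM[]. Qed.

Lemma prime_common_multiplier P (T : eqType) (Q : T -> R -> Prop) (s : seq T) :
  prime_ideal P -> (forall i g h, Q i g -> Q i (h * g)) ->
  (forall i, i \in s -> exists2 g, ~ P g & Q i g) ->
  exists2 g, ~ P g & forall i, i \in s -> Q i g.
Proof.
move=> Pprime QM; elim: s => [_|j s IHs Qs].
  by exists 1 => //; exact: prime_idealN1.
have [g Pg Qg] := IHs (fun i si => Qs i (@mem_behead _ (j :: s) i si)).
have [h Ph Qh] := Qs j (mem_head j s).
exists (h * g) => [|i]; first exact: prime_idealNM.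
by rewrite inE => /predU1P[->|/Qg]; [rewrite mulrC|]; apply: QM.
Qed.

Lemma mem_ideal_gen S f : S f -> ideal_gen S f.
Proof. by move=> Sf; exists 1%N, (fun=> 1), (fun=> f); rewrite big_ord1 mul1r. Qed.

Lemma ideal_gen_is_ideal S : is_ideal (ideal_gen S).
Proof.
split.
- by exists 0%N, (fun=> 0), (fun=> 0); rewrite big_ord0; split=> // -[].
- move=> f g [m1 [c1 [a1 [Sa1 ->]]]] [m2 [c2 [a2 [Sa2 ->]]]].
  pose join (u1 : 'I_m1 -> R) (u2 : 'I_m2 -> R) (j : 'I_(m1 + m2)) :=
    match split j with inl j1 => u1 j1 | inr j2 => u2 j2 end.
  exists (m1 + m2)%N, (join c1 c2), (join a1 a2); split.
    by move=> j; rewrite /join; case: (split j).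
  rewrite big_split_ord /join; congr (_ + _); apply: eq_bigr => j _.
    by rewrite (unsplitK (inl j)).
  by rewrite (unsplitK (inr j)).
- move=> r f [m [c [a [Sa ->]]]]; exists m, (fun i => r * c i), a; split=> //.
  by rewrite mulr_sumr; apply: eq_bigr => i _; rewrite mulrA.
Qed.

Lemma ideal_gen_min S J : is_ideal J -> psubset S J -> psubset (ideal_gen S) J.
Proof.
move=> JI SJ f [m [c [a [Sa ->]]]]; apply: ideal_sum => // i.
by apply: idealMl JI _; apply: SJ.
Qed.

Lemma ideal_pow_is_ideal J t : is_ideal (ideal_pow J t).
Proof. exact: ideal_gen_is_ideal. Qed.

Lemma ideal_pow_mono J K t : psubset J K -> psubset (ideal_pow J t) (ideal_pow K t).
Proof.
move=> JK; apply: ideal_gen_min; first exact: ideal_pow_is_ideal.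
by move=> _ [a [Ja ->]]; apply: mem_ideal_gen; exists a; split=> // i; apply/JK.
Qed.

Lemma ideal_pow0 J f : ideal_pow J 0 f.
Proof.
rewrite -[f]mulr1; apply: idealMl (ideal_pow_is_ideal _ _) _; apply: mem_ideal_gen.
by exists (fun=> 1); rewrite big_ord0; split=> // -[].
Qed.

Lemma ideal_powSr J t f g : ideal_pow J t f -> J g -> ideal_pow J t.+1 (f * g).
Proof.
move=> Jf Jg; have JgI : is_ideal (fun f => ideal_pow J t.+1 (f * g)).
  have JtI := ideal_pow_is_ideal J t.+1; split.
  - by rewrite mul0r; apply: ideal0.
  - by move=> f1 f2 J1 J2; rewrite mulrDl; apply: idealD.
  - by move=> r f1 J1; rewrite -mulrA; apply: idealMl.
apply: (ideal_gen_min JgI) Jf => _ [a [Ja ->]]; apply: mem_ideal_gen.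
exists (fun j => if unlift ord_max j is Some j' then a j' else g); split.
  by move=> j; case: (unlift ord_max j).
rewrite big_ord_recr /= unlift_none; congr (_ * _); apply: eq_bigr => j _.
have -> : widen_ord (leqnSn t) j = lift ord_max j.
  by apply: val_inj; rewrite /= /bump leqNgt ltn_ord.
by rewrite liftK.
Qed.

Lemma integral_over_ideal_mono J K r :
  psubset J K -> integral_over_ideal J r -> integral_over_ideal K r.
Proof.
move=> JK [m [a [m_gt0 Ja Er]]]; exists m, a; split=> // i /Ja.
exact: ideal_pow_mono.
Qed.

Section Component.
Variable F : {set 'I_n}.
Hypothesis PF_prime : prime_ideal (@PF k n F).

Lemma component_is_ideal J : is_ideal J -> is_ideal (component J F).
Proof.
move=> JI; split.
- by exists 1; split; [exact: prime_idealN1 | rewrite mulr0; exact: ideal0].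
- move=> f1 f2 [g1 [Pg1 J1]] [g2 [Pg2 J2]]; exists (g1 * g2).
  split; first exact: prime_idealNM.
  rewrite mulrDr; apply: idealD => //.
    by rewrite mulrAC; apply: idealMr.
  by rewrite -mulrA; apply: idealMl.
- by move=> r f [g [Pg Jf]]; exists g; split=> //; rewrite mulrCA; apply: idealMl.
Qed.

Lemma mem_component J f : J f -> component J F f.
Proof. by move=> Jf; exists 1; rewrite mul1r; split=> //; exact: prime_idealN1. Qed.

Lemma component_cancel J g f :
  ~ PF F g -> component J F (g * f) -> component J F f.
Proof.
move=> Pg [h [Ph Jhgf]]; exists (h * g); rewrite -mulrA; split=> //.
exact: prime_idealNM.
Qed.

Lemma ideal_pow_component J t : is_ideal J ->
  psubset (ideal_pow (component J F) t) (component (ideal_pow J t) F).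
Proof.
move=> JI; apply: ideal_gen_min.
  exact: component_is_ideal (ideal_pow_is_ideal _ _).
move=> _ [+ [+ ->]]; elim: t => [|t IHt] a Ja.
  by apply: mem_component; exact: ideal_pow0.
rewrite big_ord_recr /=.
have [g1 [Pg1 J1]] := IHt (fun j => a (widen_ord (leqnSn t) j)) (fun j => Ja _).
have [g2 [Pg2 J2]] := Ja ord_max.
exists (g1 * g2); split; first exact: prime_idealNM.
by rewrite mulrACA; exact: ideal_powSr.
Qed.

Lemma integral_over_component J r : is_ideal J ->
  integral_over_ideal (component J F) r ->
  exists2 g, ~ PF F g & integral_over_ideal J (g * r).
Proof.
move=> JI [m [a [m_gt0 Ja Er]]].
have [g Pg Jga] : exists2 g, ~ PF F g &
    forall i, i \in iota 1 m -> ideal_pow J i (g * a i).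
  apply: prime_common_multiplier => // [i g h Jga|i].
    by rewrite -mulrA; apply: idealMl (ideal_pow_is_ideal _ _) Jga.
  rewrite mem_iota add1n => /Ja /(ideal_pow_component JI) [h [Ph Jha]].
  by exists h.
exists g => //; exists m, (fun i => g ^+ i * a i); split=> //.
  move=> i /andP[i_gt0 i_le_m]; rewrite -(prednK i_gt0) exprSr prednK //.
  rewrite -mulrA; apply: idealMl (ideal_pow_is_ideal _ _) (Jga _ _).
  by rewrite mem_iota add1n i_gt0 ltnS.
have -> : (g * r) ^+ m + \sum_(1 <= i < m.+1) g ^+ i * a i * (g * r) ^+ (m - i)
    = g ^+ m * (r ^+ m + \sum_(1 <= i < m.+1) a i * r ^+ (m - i)).
  rewrite mulrDr exprMn mulr_sumr; congr (_ + _).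
  apply: eq_big_nat => i /andP[_ i_le_m].
  by rewrite exprMn mulrACA -exprD subnKC.
by rewrite Er mulr0.
Qed.

End Component.

Lemma integrally_closed_symbolic_powP I t :
  (forall F, inFI I F -> forall f,
     component (ideal_pow I t) F f <-> ideal_pow (component I F) t f) ->
  integrally_closed (symbolic_pow I t) <->
  (forall F, inFI I F -> integrally_closed (ideal_pow (component I F) t)).
Proof.
move=> powE; split=> [closed F FI r rI | closed r rI F FI].
  have [PF_prime _ _] := FI; apply/(powE F FI).
  have [g Pg grI] : exists2 g, ~ PF F g & integral_over_ideal (ideal_pow I t) (g * r).
    apply: integral_over_component (ideal_pow_is_ideal I t) _ => //.
    by apply: (integral_over_ideal_mono _ rI) => f /(powE F FI).
  have /(_ F FI) : symbolic_pow I t (g * r).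
    apply/closed/(integral_over_ideal_mono _ grI) => f If F' [F'_prime _ _].
    exact: mem_component.
  exact: component_cancel.
apply/(powE F FI)/(closed F FI).
by apply: (integral_over_ideal_mono _ rI) => f /(_ F FI) /(powE F FI).
Qed.

End Ideals.

Section MonomialIdeals.
Variables (k : fieldType) (n : nat).
Local Notation R := {mpoly k[n]}.
Implicit Types (J K : pset k n) (f g p : R) (a b e m : 'X_{1..n}).
Implicit Types (B G M : 'X_{1..n} -> Prop) (F : {set 'I_n}).

Definition monomials M : pset k n := fun g => exists m, M m /\ g = 'X_[m].

Definition supported_in B : pset k n := fun f => forall e, e \in msupp f -> B e.

Definition upclosed B := forall a b, B a -> (a <= b)%MM -> B b.

Definition above M e := exists2 m, M m & (m <= e)%MM.

Fixpoint above_sum B t e : Prop :=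
  if t is t'.+1 then exists a b, [/\ B a, above_sum B t' b & (a + b <= e)%MM]
  else True.

Lemma mcoeff_sumZX (s : seq 'X_{1..n}) (c : 'X_{1..n} -> k) e : uniq s ->
  (\sum_(m <- s) c m *: 'X_[m] : R)@_e = if e \in s then c e else 0.
Proof.
move=> s_uniq; rewrite raddf_sum /=.
under eq_bigr do rewrite mcoeffZ mcoeffX.
case: ifP => [e_s|/negbT e_s].
  rewrite (bigD1_seq e) //= eqxx mulr1 big1 ?addr0 // => m /negbTE->.
  by rewrite mulr0.
rewrite big1_seq // => m /andP[_ m_s].
by rewrite (_ : m == e = false) ?mulr0 //; apply: contraNF e_s => /eqP <-.
Qed.

Lemma msupp_sumZX (s : seq 'X_{1..n}) (c : 'X_{1..n} -> k) e : uniq s ->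
  e \in msupp (\sum_(m <- s) c m *: 'X_[m] : R) -> e \in s.
Proof.
by move=> s_uniq; rewrite mcoeff_msupp mcoeff_sumZX //; case: ifP; rewrite ?eqxx.
Qed.

Lemma mpoly_split_supp G f : exists f1 f2,
  [/\ f = f1 + f2, supported_in G f1 & forall e, e \in msupp f2 -> ~ G e].
Proof.
pose Gb e := if excluded_middle_informative (G e) then true else false.
have GbP e : Gb e <-> G e by rewrite /Gb; case: excluded_middle_informative.
pose part (P : pred 'X_{1..n}) : R :=
  \sum_(e <- [seq e <- msupp f | P e]) f@_e *: 'X_[e].
have part_uniq P : uniq [seq e <- msupp f | P e] by rewrite filter_uniq ?msupp_uniq.
exists (part Gb), (part (predC Gb)); split.
- by rewrite /part !big_filter {1}[f]mpolyE (bigID Gb).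
- by move=> e /(msupp_sumZX (part_uniq _)); rewrite mem_filter => /andP[/GbP].
- move=> e /(msupp_sumZX (part_uniq _)); rewrite mem_filter => /andP[/= + _].
  by move=> /negP nGb /GbP.
Qed.

Lemma supported_in_is_ideal B : upclosed B -> is_ideal (supported_in B).
Proof.
move=> Bup; split.
- by move=> e; rewrite mcoeff_msupp mcoeff0 eqxx.
- by move=> f g Bf Bg e /msuppD_le; rewrite mem_cat => /orP[/Bf|/Bg].
- move=> g f Bf e /msuppM_le /allpairsP[[m1 m2] /= [_ /Bf Bm2 ->]].
  exact: Bup Bm2 (lem_addl _ _).
Qed.

Lemma mem_ideal_msupp K f : is_ideal K ->
  (forall e, e \in msupp f -> K 'X_[e]) -> K f.
Proof.
move=> KI Kf; rewrite [f]mpolyE big_seq.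
apply: big_ind => [|x y|e /Kf]; [exact: ideal0 | exact: idealD |].
by rewrite -mul_mpolyC; apply: idealMl.
Qed.

Lemma upclosed_above M : upclosed (above M).
Proof. by move=> a b [m Mm le_ma] le_ab; exists m => //; exact: lepm_trans le_ab. Qed.

Lemma ideal_gen_monomials_supported M :
  psubset (ideal_gen (monomials M)) (supported_in (above M)).
Proof.
apply: ideal_gen_min; first exact: supported_in_is_ideal (@upclosed_above M).
move=> _ [m [Mm ->]] e; rewrite msuppX mem_seq1 => /eqP ->.
by exists m => //; exact: lepm_refl.
Qed.

Lemma upclosed_above_sum B t : upclosed (above_sum B t).
Proof.
case: t => [//|t] e e' [a [b [Ba Bb le_abe]]] le_ee'.
by exists a, b; split=> //; exact: lepm_trans le_ee'.
Qed.

Lemma above_sum_mono B B' t e : (forall a, B a -> B' a) ->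
  above_sum B t e -> above_sum B' t e.
Proof.
move=> BB'; elim: t e => [//|t IHt] e [a [b [Ba Bb le_abe]]].
by exists a, b; split=> //; [exact: BB' | exact: IHt].
Qed.

Lemma supported_in_prod B t (a : 'I_t -> R) :
  (forall j, supported_in B (a j)) ->
  supported_in (above_sum B t) (\prod_(j < t) a j).
Proof.
elim: t a => [//|t IHt] a Ba.
rewrite big_ord_recr => e /msuppM_le /allpairsP[[e1 e2] /= [e1_prod e2_a ->]].
exists e2, e1; split; first exact: (Ba ord_max).
  exact: (IHt (fun j => a (widen_ord (leqnSn t) j))).
by rewrite addmC; exact: lepm_refl.
Qed.

Lemma ideal_pow_supported_in K B t : is_ideal K ->
  (forall b, B b -> K 'X_[b]) ->
  psubset (supported_in (above_sum B t)) (ideal_pow K t).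
Proof.
move=> KI KB; have KtX e : above_sum B t e -> ideal_pow K t 'X_[e].
  elim: t e => [e _|t IHt e [a [b [Ba Bb le_abe]]]]; first exact: ideal_pow0.
  rewrite -(submK le_abe) mpolyXD; apply: idealMl (ideal_pow_is_ideal _ _) _.
  by rewrite addmC mpolyXD; apply: ideal_powSr; [exact: IHt | exact: KB].
move=> f Bf; apply: mem_ideal_msupp; first exact: ideal_pow_is_ideal.
by move=> e /Bf /KtX.
Qed.

Definition mnm_out F e : 'X_{1..n} := [multinom if i \in F then 0%N else e i | i < n].

Definition mnm_in F a := mnm_out F a == 0%MM.

Lemma mnm_outE F e i : mnm_out F e i = if i \in F then 0%N else e i.
Proof. exact: mnmE. Qed.

Lemma mnm_out_le F e : (mnm_out F e <= e)%MM.
Proof. by apply/mnm_lepP => i; rewrite mnm_outE; case: ifP. Qed.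

Lemma mnm_outD F a b : mnm_out F (a + b) = (mnm_out F a + mnm_out F b)%MM.
Proof. by apply/mnmP => i; rewrite mnmDE !mnm_outE mnmDE; case: (i \in F). Qed.

Lemma lepm_out F a b : (a <= b)%MM -> (mnm_out F a <= mnm_out F b)%MM.
Proof.
move/mnm_lepP => le_ab; apply/mnm_lepP => i; rewrite !mnm_outE.
by case: ifP => // _; exact: le_ab.
Qed.

Lemma mnm_out_id F e : mnm_out F (mnm_out F e) = mnm_out F e.
Proof. by apply/mnmP => i; rewrite !mnm_outE; case: (i \in F). Qed.

Lemma mnm_inP F a : reflect (forall i, i \notin F -> a i = 0%N) (mnm_in F a).
Proof.
apply: (iffP eqP) => [/mnmP a0 i iF | a0].
  by move: (a0 i); rewrite mnm_outE mnm0E (negbTE iF).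
by apply/mnmP => i; rewrite mnm_outE mnm0E; case: ifPn => // /a0.
Qed.

Lemma mnm_out_inDl F a e : mnm_in F a -> mnm_out F (a + e) = mnm_out F e.
Proof. by rewrite mnm_outD => /eqP ->; rewrite add0m. Qed.

Lemma mnm_in_subout F e : mnm_in F (e - mnm_out F e).
Proof. by apply/mnm_inP => i iF; rewrite mnmBE mnm_outE (negbTE iF) subnn. Qed.

Lemma above_sum_out B F t e : (forall a, B a -> B (mnm_out F a)) ->
  above_sum B t e -> above_sum B t (mnm_out F e).
Proof.
move=> B_out; elim: t e => [//|t IHt] e [a [b [Ba Bb le_abe]]].
exists (mnm_out F a), (mnm_out F b); split; [exact: B_out | exact: IHt |].
by rewrite -mnm_outD; exact: lepm_out.
Qed.

Lemma PF_supported F :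
  psubset (PF F) (supported_in (fun e => exists2 i, i \notin F & (0 < e i)%N)).
Proof.
apply: ideal_gen_min.
  apply: supported_in_is_ideal => a b [i iF a_i] /mnm_lepP le_ab.
  by exists i => //; exact: leq_trans a_i (le_ab i).
move=> _ [i [iF ->]] e; rewrite msuppX mem_seq1 => /eqP ->.
by exists i; rewrite // mnm1E eqxx.
Qed.

Lemma X_notin_PF F a : mnm_in F a -> ~ PF F ('X_[a] : R).
Proof.
move=> /mnm_inP a0 /PF_supported /(_ a); rewrite msuppX mem_seq1 eqxx.
by case=> // i /a0 ->.
Qed.

Lemma notPF_msupp F g : ~ PF F g -> exists2 a, a \in msupp g & mnm_in F a.
Proof.
move=> Pg; apply/hasP; apply: contra_notT Pg => /hasPn g_out.
apply: mem_ideal_msupp => [|e /g_out /negP e_out]; first exact: ideal_gen_is_ideal.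
have [i iF e_i] : exists2 i, i \notin F & e i != 0%N.
  case: (boolP [exists i, (i \notin F) && (e i != 0%N)]) => [|/existsPn e0].
    by case/existsP=> i /andP[]; exists i.
  by case: e_out; apply/mnm_inP => i iF; apply/eqP; move: (e0 i); rewrite iF negbK.
have le_ie : (U_(i) <= e)%MM by rewrite lep1mP.
rewrite -(submK le_ie) mpolyXD; apply: idealMl (ideal_gen_is_ideal _) _.
by apply: mem_ideal_gen; exists i.
Qed.

Lemma component_X_out J F m : J 'X_[m] -> component J F 'X_[mnm_out F m].
Proof.
move=> Jm; exists 'X_[m - mnm_out F m]; split.
  exact: X_notin_PF (@mnm_in_subout F m).
by rewrite -mpolyXD submK // mnm_out_le.
Qed.

Lemma coefM_low (S : nzRingType) (p q : {poly S}) d :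
  (forall i, (i < d)%N -> q`_i = 0) -> (p * q)`_d = p`_0 * q`_d.
Proof.
move=> q_low; rewrite coefM big_ord_recl big1 ?addr0 ?subn0 // => j _.
rewrite q_low ?mulr0 // lift0 ltn_subrL /=.
exact: leq_ltn_trans (leq0n j) (ltn_ord j).
Qed.

Section Grading.
Variable F : {set 'I_n}.

Definition outdeg e := mdeg (mnm_out F e).

Definition graded_var (i : 'I_n) : {poly R} := ('X_i : R)%:P * 'X^(i \notin F).

Definition grading p : {poly R} := mmap (polyC \o @mpolyC n k) graded_var p.

Lemma gradingM p q : grading (p * q) = grading p * grading q.
Proof. exact: rmorphM. Qed.

Lemma grading_monomial m : mmap1 graded_var m = ('X_[m] : R)%:P * 'X^(outdeg m).
Proof.
rewrite /mmap1 /graded_var.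
under eq_bigr do rewrite exprMn -rmorphXn -exprM.
rewrite /outdeg mdegE big_split /= -rmorph_prod prodrXr -mpolyXE_id; congr (_ * 'X^_).
by apply: eq_bigr => i _; rewrite mnm_outE; case: (i \in F); rewrite ?mul0n ?mul1n.
Qed.

Lemma coef_grading p d :
  (grading p)`_d = \sum_(m <- msupp p) (if outdeg m == d then p@_m else 0) *: 'X_[m].
Proof.
rewrite /grading /mmap coef_sum; apply: eq_bigr => m _.
rewrite (grading_monomial m) /= mulrA -rmorphM coefMXn coefC mul_mpolyC.
case: (ltngtP d (outdeg m)) => [_|lt_m|->]; rewrite ?scale0r ?subnn ?eqxx //.
by rewrite subn_eq0 leqNgt lt_m.
Qed.

Lemma mcoeff_grading p d e :
  ((grading p)`_d)@_e = if outdeg e == d then p@_e else 0.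
Proof.
rewrite coef_grading mcoeff_sumZX ?msupp_uniq //.
by case: (boolP (e \in msupp p)) => // /memN_msupp_eq0 ->; case: ifP.
Qed.

Lemma msupp_grading p d e :
  e \in msupp ((grading p)`_d) -> e \in msupp p /\ outdeg e = d.
Proof.
rewrite !mcoeff_msupp mcoeff_grading.
by case: (outdeg e =P d) => [-> | _]; rewrite ?eqxx.
Qed.

Lemma grading_msupp_neq0 p e : e \in msupp p -> (grading p)`_(outdeg e) != 0.
Proof.
rewrite mcoeff_msupp; apply: contra_neq => /(congr1 (mcoeff e)).
by rewrite mcoeff_grading eqxx mcoeff0.
Qed.

Lemma outdeg_eq0 e : (outdeg e == 0%N) = mnm_in F e.
Proof. exact: mdeg_eq0. Qed.

Lemma msuppM_notPF g p : ~ PF F g -> p != 0 ->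
  exists a b, [/\ mnm_in F a, b \in msupp p & (a + b)%MM \in msupp (g * p)].
Proof.
move=> Pg p_neq0; have [a ag Fa] := notPF_msupp Pg.
have [d pd_neq0 d_min] := ex_minnP (ex_intro (fun d => (grading p)`_d != 0) _
  (grading_msupp_neq0 (mlead_supp p_neq0))).
have g0_neq0 : (grading g)`_0 != 0.
  by rewrite -(eqP (etrans (outdeg_eq0 a) Fa)); exact: grading_msupp_neq0.
have gpd : (grading (g * p))`_d = (grading g)`_0 * (grading p)`_d.
  rewrite gradingM; apply: coefM_low => i lt_id; apply/eqP/negPn/negP.
  by move=> /d_min; rewrite leqNgt lt_id.
have /mlead_supp e_gpd : (grading (g * p))`_d != 0 by rewrite gpd mulf_neq0.
have [e_gp _] := msupp_grading e_gpd; move: e_gpd e_gp; rewrite gpd.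
move=> /msuppM_le /allpairsP[[a' b'] /= [/msupp_grading[_ a'0] + ->]].
move=> /msupp_grading[b'p _].
by exists a', b'; split=> //; rewrite -outdeg_eq0 a'0.
Qed.

Lemma supported_in_cancel G g f : upclosed G ->
  (forall a e, mnm_in F a -> G (a + e)%MM -> G e) ->
  ~ PF F g -> supported_in G (g * f) -> supported_in G f.
Proof.
move=> Gup G_cancel Pg Ggf; have GI := supported_in_is_ideal Gup.
have [f1 [f2 [f_def Gf1 nGf2]]] := mpoly_split_supp G f; rewrite f_def in Ggf *.
have Ggf2 : supported_in G (g * f2).
  have -> : g * f2 = g * (f1 + f2) - g * f1 by rewrite mulrDr addrAC subrr add0r.
  exact: idealB GI Ggf (idealMl g GI Gf1).
have [-> | f2_neq0] := eqVneq f2 0; first by rewrite addr0.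
have [a [b [Fa bf2 abgf2]]] := msuppM_notPF Pg f2_neq0.
by case: (nGf2 b bf2); apply: G_cancel Fa (Ggf2 _ abgf2).
Qed.

End Grading.

Section MonomialIdeal.
Variables (I : pset k n) (M : 'X_{1..n} -> Prop).
Hypothesis I_gen : forall f, I f <-> ideal_gen (monomials M) f.

Lemma monomial_ideal_is_ideal : is_ideal I.
Proof.
have [J0 JD JM] := ideal_gen_is_ideal (monomials M); split.
- by apply/I_gen.
- by move=> f g /I_gen If /I_gen Ig; apply/I_gen/JD.
- by move=> r f /I_gen If; apply/I_gen/JM.
Qed.

Lemma component_pow_monomial F t : prime_ideal (@PF k n F) ->
  forall f, component (ideal_pow I t) F f <-> ideal_pow (component I F) t f.
Proof.
move=> PF_prime f; split; last first.
  exact: ideal_pow_component monomial_ideal_is_ideal f.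
case=> g [Pg Igf].
pose B a := exists2 m, M m & (mnm_out F m <= a)%MM.
have B_out a : B a -> B (mnm_out F a).
  by case=> m Mm le_ma; exists m; rewrite // -(mnm_out_id F m) lepm_out.
have Bt_gf : supported_in (above_sum B t) (g * f).
  move: Igf; apply: ideal_gen_min.
    exact: supported_in_is_ideal (@upclosed_above_sum _ _).
  move=> _ [a [Ia ->]].
  have Ma j : supported_in (above M) (a j).
    by apply: ideal_gen_monomials_supported; apply/I_gen.
  move=> e /(supported_in_prod Ma); apply: above_sum_mono => b [m Mm le_mb].
  by exists m => //; exact: lepm_trans (mnm_out_le F m) le_mb.
have IF_ideal := component_is_ideal PF_prime monomial_ideal_is_ideal.
have IF_B b : B b -> component I F 'X_[b].
  case=> m Mm le_mb; rewrite -(submK le_mb) mpolyXD; apply: idealMl IF_ideal _.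
  by apply: component_X_out; apply/I_gen; apply: mem_ideal_gen; exists m.
apply: (ideal_pow_supported_in IF_ideal IF_B).
apply: supported_in_cancel Pg Bt_gf; first exact: upclosed_above_sum.
move=> a e Fa /(above_sum_out B_out); rewrite mnm_out_inDl // => Bt_e.
exact: upclosed_above_sum Bt_e (mnm_out_le F e).
Qed.

End MonomialIdeal.
End MonomialIdeals.

Theorem proposition2p2 (k : fieldType) (n : nat) (I : {mpoly k[n]} -> Prop)
    (t : nat) :
  monomial_ideal I -> (1 <= t)%N ->
  (integrally_closed (symbolic_pow I t) <->
   (forall F : {set 'I_n}, inFI I F ->
      integrally_closed (ideal_pow (component I F) t))).
Proof.
move=> [M I_gen] _; apply: integrally_closed_symbolic_powP => F [PF_prime _ _].
exact: component_pow_monomial I_gen F t PF_prime.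
Qed.
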